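(* Fix $\theta=(A,D,\omega)\in(\epsilon,1-\epsilon)^{2p+1}$, $\gamma\in\Gamma$, $k\in\{0,1\}^p$ with $p_k=\sum_jk_j\ge1$, and an ordering $(K_1,\dots,K_{p_k})$ of $\{j:k_j=1\}$. Let $\gamma(0)=\gamma,\gamma(1),\dots,\gamma(p_k)=\gamma'$ be a path of the forward PARNI proposal, i.e. for each $r$, $\gamma(r)\in\{\gamma(r-1),\gamma(r-1)^{(K_r)}\}$. Define the forward proposal probability $q(\gamma,\gamma')=\prod_{r=1}^{p_k}s_{K_r}(\gamma(r-1),\gamma(r))$ and the reverse proposal probability $q'(\gamma',\gamma)=\prod_{r=1}^{p_k}s_{K_{p_k-r+1}}(\gamma(p_k-r+1),\gamma(p_k-r))$ (the reverse move uses the reversed ordering and traverses the same path backwards). Let $Z(r)=Z_{K_r}(\gamma(r-1))$ and $Z'(r)=Z_{K_{p_k-r+1}}(\gamma(p_k-r+1))$. Then $$\frac{\pi(\gamma')\,p^{\mathrm{RN}}_\eta(k\mid\gamma')\,q'(\gamma',\gamma)}{\pi(\gamma)\,p^{\mathrm{RN}}_\eta(k\mid\gamma)\,q(\gamma,\gamma')}=\prod_{r=1}^{p_k}\frac{Z(r)}{Z'(r)},$$ so that the PARNI Metropolis–Hastings acceptance probability equals $\min\{1,\prod_{r=1}^{p_k}Z(r)/Z'(r)\}$.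
   Context: $\Gamma=\{0,1\}^p$; $\pi$ is an everywhere positive probability mass function on $\Gamma$. $g:(0,\infty)\to(0,\infty)$ is continuous and a balancing function: $g(t)=t\,g(1/t)$ for all $t>0$. $\epsilon\in(0,1/2)$, $\eta=(A,D)$. $p^{\mathrm{RN}}_\eta(k\mid\gamma)=\prod_jp_j(k_j\mid\gamma_j)$ with $p_j(1\mid0)=A_j$, $p_j(0\mid0)=1-A_j$, $p_j(1\mid1)=D_j$, $p_j(0\mid1)=1-D_j$. For $x\in\Gamma$ and a coordinate $j$, $x^{(j)}$ denotes $x$ with coordinate $j$ flipped. Define $t_j(x)=\frac{\pi(x^{(j)})\,p_j(1\mid x^{(j)}_j)}{\pi(x)\,p_j(1\mid x_j)}$ (equivalently $\frac{\pi(x^{(j)})p^{\mathrm{RN}}_\eta(e(j)\mid x^{(j)})}{\pi(x)p^{\mathrm{RN}}_\eta(e(j)\mid x)}$ with $e(j)$ the $j$-th standard basis vector), $Z_j(x)=(1-\omega)g(1)+\omega\,g(t_j(x))$, and the one-coordinate step probabilities $s_j(x,x^{(j)})=\omega g(t_j(x))/Z_j(x)$, $s_j(x,x)=(1-\omega)g(1)/Z_j(x)$ (zero for other targets). PARNI proposal: from $\gamma$, draw $k\sim p^{\mathrm{RN}}_\eta(\cdot\mid\gamma)$, order $\{j:k_j=1\}$ as $(K_1,\dots,K_{p_k})$, set $\gamma(0)=\gamma$ and successively draw $\gamma(r)\sim s_{K_r}(\gamma(r-1),\cdot)$; the proposal is $\gamma'=\gamma(p_k)$. *)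

From HB Require Import structures.
From mathcomp Require Import all_boot all_order all_algebra.
From mathcomp Require Import all_classical all_reals all_analysis.
Set Implicit Arguments. Unset Strict Implicit. Unset Printing Implicit Defensive.
Import Order.TTheory GRing.Theory Num.Theory numFieldNormedType.Exports.
Local Open Scope ring_scope.

Definition Gam (p : nat) := {ffun 'I_p -> bool}.

Definition flip (p : nat) (x : Gam p) (j : 'I_p) : Gam p :=
  [ffun i => if i == j then ~~ x i else x i].

Section Parni.
Variables (R : realType) (p : nat).

(* p_j(c | b) : probability that k_j = c given gamma_j = b *)
Definition pj (A D : 'I_p -> R) (j : 'I_p) (c b : bool) : R :=
  if b then (if c then D j else 1 - D j) else (if c then A j else 1 - A j).

Definition pRN (A D : 'I_p -> R) (k x : Gam p) : R :=
  \prod_(j < p) pj A D j (k j) (x j).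

Definition tj (pi : Gam p -> R) (A D : 'I_p -> R) (j : 'I_p) (x : Gam p) : R :=
  (pi (flip x j) * pj A D j true (flip x j j)) / (pi x * pj A D j true (x j)).

Definition Zj (g : R -> R) (omega : R) (pi : Gam p -> R) (A D : 'I_p -> R)
  (j : 'I_p) (x : Gam p) : R :=
  (1 - omega) * g 1 + omega * g (tj pi A D j x).

Definition sj (g : R -> R) (omega : R) (pi : Gam p -> R) (A D : 'I_p -> R)
  (j : 'I_p) (x y : Gam p) : R :=
  if y == flip x j then omega * g (tj pi A D j x) / Zj g omega pi A D j x
  else if y == x then (1 - omega) * g 1 / Zj g omega pi A D j x
  else 0.

End Parni.

Definition mh_accept (R : realType) (ratio : R) : R := Num.min 1 ratio.

From HB Require Import structures.
From mathcomp Require Import all_boot all_order all_algebra.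
From mathcomp Require Import all_classical all_reals all_analysis.
From mathcomp Require Import ring lra zify.
Set Implicit Arguments. Unset Strict Implicit. Unset Printing Implicit Defensive.
Import Order.TTheory GRing.Theory Num.Theory numFieldNormedType.Exports.
Local Open Scope ring_scope.

(* Each single-coordinate step satisfies a detailed-balance identity with
   respect to the extended target [pi x * pRN k x], up to the normalising
   constants: since [k_j = 1], the target ratio of [x^(j)] to [x] is exactly
   [t = t_j(x)], while [t_j(x^(j)) = 1/t], and the balancing property
   [g t = t g (1/t)] closes the identity.  Multiplying these identities along
   the path telescopes the targets and leaves only the ratio of the [Z]'s. *)

Lemma flip_neq (p : nat) (x : Gam p) (j : 'I_p) : flip x j != x.
Proof.
apply/eqP => /(congr1 (fun f : Gam p => f j)); rewrite /flip ffunE eqxx.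
by case: (x j).
Qed.

Lemma flipK (p : nat) (j : 'I_p) : involutive (fun x : Gam p => flip x j).
Proof.
move=> x; apply/ffunP => i; rewrite /flip !ffunE.
by case: eqP => // ->; exact: negbK.
Qed.

Lemma prodr_telescope (R : comPzRingType) (F : nat -> R) (n : nat)
    (a b : 'I_n -> R) :
  (forall i : 'I_n, F i.+1 * a i = F i * b i) ->
  F n * \prod_(i < n) a i = F 0%N * \prod_(i < n) b i.
Proof.
elim: n a b => [|n IHn] a b step; first by rewrite !big_ord0.
rewrite !big_ord_recr /= mulrCA (step ord_max) /= -mulrCA !mulrA.
rewrite (IHn _ (fun i => b (widen_ord (leqnSn n) i))) // => i.
exact: (step (widen_ord _ i)).
Qed.

Lemma prod_rev_path (R : comPzRingType) (n : nat) (f : 'I_n -> nat -> nat -> R) :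
  \prod_(r < n) f (rev_ord r) (n - r)%N (n - r - 1)%N
  = \prod_(r < n) f r r.+1 r.
Proof.
rewrite (reindex_inj rev_ord_inj); apply: eq_bigr => r _; rewrite rev_ordK.
by congr (f _ _ _); have := ltn_ord r; rewrite /=; lia.
Qed.

Section SingleStep.
Variables (R : realType) (p : nat) (pi : Gam p -> R) (g : R -> R)
  (A D : 'I_p -> R) (omega : R).
Hypothesis pi_gt0 : forall x, 0 < pi x.
Hypothesis g_gt0 : forall t, 0 < t -> 0 < g t.
Hypothesis g_balanced : forall t, 0 < t -> g t = t * g t^-1.
Hypothesis A01 : forall j, 0 < A j < 1.
Hypothesis D01 : forall j, 0 < D j < 1.
Hypothesis omega01 : 0 < omega < 1.

Local Notation t := (tj pi A D).
Local Notation Z := (Zj g omega pi A D).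
Local Notation s := (sj g omega pi A D).

Lemma pj_gt0 j c b : 0 < pj A D j c b.
Proof.
have [a0 a1] := andP (A01 j); have [d0 d1] := andP (D01 j).
by rewrite /pj; case: b; case: c; rewrite ?subr_gt0.
Qed.

Lemma tj_gt0 j x : 0 < t j x.
Proof. by rewrite /tj divr_gt0 // mulr_gt0 // pj_gt0. Qed.

Lemma tj_flip j x : t j (flip x j) = (t j x)^-1.
Proof. by rewrite /tj flipK invf_div. Qed.

Lemma Zj_gt0 j x : 0 < Z j x.
Proof.
have [w0 w1] := andP omega01.
rewrite /Zj addr_gt0 // mulr_gt0 //; first by rewrite subr_gt0.
  exact: g_gt0.
exact/g_gt0/tj_gt0.
Qed.

Lemma sj_gt0 j x y : y = x \/ y = flip x j -> 0 < s j x y.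
Proof.
have [w0 w1] := andP omega01.
rewrite /sj; case=> ->.
  rewrite eq_sym (negbTE (flip_neq _ _)) eqxx divr_gt0 ?Zj_gt0 // mulr_gt0 //.
    by rewrite subr_gt0.
  exact: g_gt0.
by rewrite eqxx divr_gt0 ?Zj_gt0 // mulr_gt0 //; exact/g_gt0/tj_gt0.
Qed.

Lemma pRN_flip k x j :
  pRN A D k (flip x j) * pj A D j (k j) (x j)
  = pRN A D k x * pj A D j (k j) (flip x j j).
Proof.
have off_j : \prod_(i < p | i != j) pj A D i (k i) (flip x j i)
          = \prod_(i < p | i != j) pj A D i (k i) (x i).
  by apply: eq_bigr => i ij; rewrite /flip ffunE (negbTE ij).
rewrite /pRN (bigD1 j) //= off_j [in RHS](bigD1 j) //=; ring.
Qed.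

Lemma target_flip (k : Gam p) x j : k j ->
  pi (flip x j) * pRN A D k (flip x j) = t j x * (pi x * pRN A D k x).
Proof.
move=> kj; have pjx := pj_gt0 j true (x j); have pix := pi_gt0 x.
have := pRN_flip k x j; rewrite kj /tj => E.
rewrite -[pRN A D k (flip x j)](mulfK (lt0r_neq0 pjx)) E.
by field; rewrite !gt_eqF.
Qed.

Lemma sj_detailed_balance (k : Gam p) j x y : k j ->
  y = x \/ y = flip x j ->
  pi y * pRN A D k y * (s j y x * Z j y) = pi x * pRN A D k x * (s j x y * Z j x).
Proof.
move=> kj [-> //| ->].
have sZ z : s j z (flip z j) * Z j z = omega * g (t j z).
  by rewrite /sj eqxx mulfVK // gt_eqF ?Zj_gt0.
have := sZ (flip x j); rewrite flipK => ->.
rewrite sZ tj_flip target_flip //.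
by rewrite [g (t j x)]g_balanced ?tj_gt0 //; ring.
Qed.

End SingleStep.

Lemma interval_sub01 (R : realFieldType) (eps a : R) :
  0 < eps -> eps < a < 1 - eps -> 0 < a < 1.
Proof. by move=> e0 /andP[h1 h2]; apply/andP; split; lra. Qed.

Theorem proposition3 (R : realType) (p : nat) (eps : R)
  (pi : Gam p -> R) (g : R -> R) (A D : 'I_p -> R) (omega : R)
  (gamma k : Gam p) (n : nat) (K : 'I_n -> 'I_p) (gam : nat -> Gam p) :
  0 < eps -> eps < 1 / 2 ->
  (forall x, 0 < pi x) -> \sum_(x : Gam p) pi x = 1 ->
  (forall t : R, 0 < t -> 0 < g t) ->
  (forall t : R, 0 < t -> {for t, continuous g}) ->
  (forall t : R, 0 < t -> g t = t * g (t^-1)) ->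
  (forall j, eps < A j < 1 - eps) -> (forall j, eps < D j < 1 - eps) ->
  eps < omega < 1 - eps ->
  (1 <= \sum_(j < p) k j)%N ->
  injective K -> (forall j, k j = (j \in codom K)) ->
  gam 0%N = gamma ->
  (forall r : 'I_n, gam r.+1 = gam r \/ gam r.+1 = flip (gam r) (K r)) ->
  let q := \prod_(r < n) sj g omega pi A D (K r) (gam r) (gam r.+1) in
  let q' := \prod_(r < n)
      sj g omega pi A D (K (rev_ord r)) (gam (n - r)%N) (gam (n - r - 1)%N) in
  let Zr := \prod_(r < n)
      (Zj g omega pi A D (K r) (gam r)
       / Zj g omega pi A D (K (rev_ord r)) (gam (n - r)%N)) in
  let ratio := (pi (gam n) * pRN A D k (gam n) * q')
               / (pi gamma * pRN A D k gamma * q) in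
  ratio = Zr /\ mh_accept ratio = Num.min 1 Zr.
Proof.
move=> e0 _ pi_gt0 _ g_gt0 _ g_bal HA HD Hw _ _ Hk <- path q q' Zr ratio.
have A01 j := interval_sub01 e0 (HA j); have D01 j := interval_sub01 e0 (HD j).
have w01 := interval_sub01 e0 Hw.
have q'E : q' = \prod_(i < n) sj g omega pi A D (K i) (gam i.+1) (gam i).
  exact: (prod_rev_path (fun i a b => sj g omega pi A D (K i) (gam a) (gam b))).
have ZrE : Zr = \prod_(i < n) Zj g omega pi A D (K i) (gam i)
              / \prod_(i < n) Zj g omega pi A D (K i) (gam i.+1).
  rewrite /Zr prodf_div.
  by rewrite (prod_rev_path (fun i a _ => Zj g omega pi A D (K i) (gam a))).
have kK (i : 'I_n) : k (K i) by rewrite Hk codom_f.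
have balance := prodr_telescope (F := fun m => pi (gam m) * pRN A D k (gam m))
  (fun i => sj_detailed_balance pi_gt0 g_gt0 g_bal A01 D01 w01 (kK i) (path i)).
rewrite !big_split /= in balance.
have den_gt0 : 0 < pi (gam 0%N) * pRN A D k (gam 0%N) * q.
  rewrite !mulr_gt0 ?pi_gt0 //; apply: prodr_gt0 => i _.
    exact: pj_gt0.
  exact: sj_gt0.
have Z'_gt0 : 0 < \prod_(i < n) Zj g omega pi A D (K i) (gam i.+1).
  by apply: prodr_gt0 => i _; exact: Zj_gt0.
have ratioE : ratio = Zr.
  rewrite /ratio q'E ZrE; apply/eqP.
  rewrite eqr_div ?lt0r_neq0 // -[X in X == _]mulrA balance /q.
  by apply/eqP; ring.
by rewrite /mh_accept ratioE.
Qed.
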